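(* For fixed $p\in(0,1)$ and every $j\ge0$, $$\lim_{K\to\infty}\frac{\mathbb E(W_j)}{K}=\mathbb Q_j\qquad\text{and}\qquad \lim_{K\to\infty}\frac{\mathbb E(W_j^+)}{K}=\sum_{\ell\ge j}\mathbb Q_\ell .$$
   Context: Uniform urn model. Let $v$ be a random variable with values in the positive integers, let $K\ge 1$, let $v_1,\dots,v_K$ be i.i.d. copies of $v$ and $V=v_1+\dots+v_K$. Fix $p\in(0,1)$, with $pV$ assumed to be an integer. Conditionally on $\{v_1,\dots,v_K\}$, $pV$ balls are drawn with replacement, independently, each drawn ball having color $i$ with probability $v_i/V$. Let $\tilde v_i$ be the number of drawn balls of color $i$; $W_j=\sum_{i=1}^K\mathbf 1\{\tilde v_i=j\}$ and $W_j^+=\sum_{i=1}^K\mathbf 1\{\tilde v_i\ge j\}$. Let $\mathbb Q_j=\mathbb E\big(\frac{(pv)^j}{j!}e^{-pv}\big)$. *)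

From Stdlib Require Import Reals List Arith ZArith.
Import ListNotations.
Open Scope R_scope.

Definition sumR (l : list R) : R := fold_right Rplus 0 l.
Definition prodR (l : list R) : R := fold_right Rmult 1 l.

Fixpoint all_lists (n : nat) (dom : list nat) : list (list nat) :=
  match n with
  | O => [ [] ]
  | S n' => flat_map (fun x => map (cons x) (all_lists n' dom)) dom
  end.

Definition totV (vs : list nat) : nat := fold_right Nat.add 0%nat vs.

(* number of drawn balls: pV (assumed integer in the paper; we take the
   floor, Int_part x = floor x, which equals pV whenever pV is an integer) *)
Definition ndraws (p : R) (V : nat) : nat := Z.to_nat (Int_part (p * INR V)).

Definition tcount (c : list nat) (i : nat) : nat :=
  length (filter (Nat.eqb i) c).

(* W_j and W_j^+ as functions of the configuration (vs, c);
   colours are 0, ..., K-1 where K = length vs *)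
Definition W (j : nat) (vs c : list nat) : nat :=
  length (filter (fun i => Nat.eqb (tcount c i) j) (seq 0 (length vs))).
Definition Wplus (j : nat) (vs c : list nat) : nat :=
  length (filter (fun i => Nat.leb j (tcount c i)) (seq 0 (length vs))).

(* conditional expectation of f given (v_1,...,v_K) = vs: the pV draws are
   i.i.d., each of colour i with probability v_i / V; we sum over all
   colour sequences c of length pV *)
Definition cond_exp (p : R) (f : list nat -> list nat -> nat) (vs : list nat) : R :=
  let V := totV vs in
  sumR (map (fun c => prodR (map (fun i => INR (nth i vs 0%nat) / INR V) c)
                        * INR (f vs c))
            (all_lists (ndraws p V) (seq 0 (length vs)))).

(* truncated expectation: v_1,...,v_K i.i.d. with law q, restricted to
   values in {1,...,M}; the full expectation is its limit as M -> oo *)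
Definition trunc_exp (q : nat -> R) (p : R) (K M : nat)
  (f : list nat -> list nat -> nat) : R :=
  sumR (map (fun vs => prodR (map q vs) * cond_exp p f vs)
            (all_lists K (seq 1 M))).

Definition is_expect (q : nat -> R) (p : R) (K : nat)
  (f : list nat -> list nat -> nat) (e : R) : Prop :=
  Un_cv (fun M => trunc_exp q p K M f) e.

(* the summand of Q_j = E((p v)^j / j! e^{-p v}) at v = m *)
Definition Qterm (q : nat -> R) (p : R) (j m : nat) : R :=
  q m * ((p * INR m) ^ j / INR (fact j) * exp (- (p * INR m))).

From Stdlib Require Import Reals List Arith ZArith Lra Lia.
Import ListNotations.
Open Scope R_scope.

(** Write [n = ndraws p V] for the number of draws and [pois p m l] for the
  Poisson(p m) probability of [l].  The proof has three layers.

  1. Exact conditional expectations.  Given the urn contents [vs], the number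
     of drawn balls of colour i is Binomial(n, v_i / V), so by linearity
     E(W_j | vs) = Σ_i Bin(n, v_i/V)(j) and E(W_j^+ | vs) = Σ_i (1 - Σ_{l<j} Bin(..)(l))
     ([cond_exp_W], [cond_exp_Wplus]).
  2. Poisson limit.  Since n / V -> p, Bin(n, m/V)(l) -> pois p m l as V -> oo
     ([binomial_poisson_limit]).
  3. Averaging.  If E(f | vs) = Σ_{v in vs} psi_V(v) with psi bounded and
     psi_V(m) -> phi(m), then E(f)/K -> Σ_m q(m) phi(m): since every v_i >= 1,
     V >= K, so for K large psi_V is uniformly close to phi on {1..N}, and the
     q-mass beyond N is small ([averaging_limit]).
  The theorem follows by applying 3 to the functions of 1; for W_j^+ one also
  identifies Σ_m q(m)(1 - Σ_{l<j} pois p m l) with Σ_{l>=j} Q_l by a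
  dominated-convergence argument for q-weighted series ([tail_series_Q]). *)

Lemma sumR_app l1 l2 : sumR (l1 ++ l2) = sumR l1 + sumR l2.
Proof. induction l1; simpl; [ring | rewrite IHl1; ring]. Qed.

Lemma sumR_plus {A} (f g : A -> R) l :
  sumR (map (fun x => f x + g x) l) = sumR (map f l) + sumR (map g l).
Proof. induction l; simpl; [ring | rewrite IHl; ring]. Qed.

Lemma sumR_minus {A} (f g : A -> R) l :
  sumR (map (fun x => f x - g x) l) = sumR (map f l) - sumR (map g l).
Proof. induction l; simpl; [ring | rewrite IHl; ring]. Qed.

Lemma sumR_scal {A} (a : R) (f : A -> R) l :
  sumR (map (fun x => a * f x) l) = a * sumR (map f l).
Proof. induction l; simpl; [ring | rewrite IHl; ring]. Qed.

Lemma sumR_ext {A} (f g : A -> R) l :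
  (forall x, In x l -> f x = g x) -> sumR (map f l) = sumR (map g l).
Proof.
  induction l as [|a l IH]; simpl; intros H; [reflexivity|].
  rewrite H, IH by auto. reflexivity.
Qed.

Lemma sumR_le {A} (f g : A -> R) l :
  (forall x, In x l -> f x <= g x) -> sumR (map f l) <= sumR (map g l).
Proof.
  induction l as [|a l IH]; simpl; intros H; [lra|].
  apply Rplus_le_compat; auto.
Qed.

Lemma sumR_nonneg {A} (f : A -> R) l :
  (forall x, In x l -> 0 <= f x) -> 0 <= sumR (map f l).
Proof.
  induction l as [|a l IH]; simpl; intros H; [lra|].
  apply Rplus_le_le_0_compat; auto.
Qed.

Lemma sumR_abs_le {A} (f g : A -> R) l :
  (forall x, In x l -> Rabs (f x) <= g x) -> Rabs (sumR (map f l)) <= sumR (map g l).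
Proof.
  induction l as [|a l IH]; simpl; intros H; [rewrite Rabs_R0; lra|].
  eapply Rle_trans; [apply Rabs_triang | apply Rplus_le_compat; auto].
Qed.

Lemma sumR_const {A} (c : R) (l : list A) : sumR (map (fun _ => c) l) = INR (length l) * c.
Proof. induction l; [simpl; ring|]. cbn [map sumR fold_right length]. rewrite S_INR. fold (sumR (map (fun _ => c) l)). rewrite IHl. ring. Qed.

Lemma sumR_swap {A B} (F : A -> B -> R) l1 l2 :
  sumR (map (fun x => sumR (map (fun y => F x y) l2)) l1)
  = sumR (map (fun y => sumR (map (fun x => F x y) l1)) l2).
Proof.
  induction l1 as [|a l1 IH]; simpl.
  - induction l2; simpl; [reflexivity | rewrite <- IHl2; ring].
  - rewrite IH, <- sumR_plus. reflexivity.
Qed.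

Lemma sumR_seq_nth (g : nat -> R) (vs : list nat) :
  sumR (map (fun i => g (nth i vs 0%nat)) (seq 0 (length vs))) = sumR (map g vs).
Proof.
  induction vs; simpl; [reflexivity|]. f_equal.
  rewrite <- seq_shift, map_map. exact IHvs.
Qed.

Lemma sumR_INR l : sumR (map INR l) = INR (totV l).
Proof. induction l; simpl; [reflexivity|]. rewrite IHl, plus_INR. ring. Qed.

Lemma INR_length_filter {A} (P : A -> bool) l :
  INR (length (filter P l)) = sumR (map (fun x => if P x then 1 else 0) l).
Proof.
  induction l; simpl; [reflexivity|].
  destruct (P a); simpl length; rewrite <- IHl; [rewrite S_INR|]; ring.
Qed.

Lemma sumR_seq1 f M : sumR (map f (seq 1 M)) = sum_f_R0 f M - f 0%nat.
Proof.
  induction M; [simpl; ring|].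
  rewrite seq_S, map_app, sumR_app, IHM. simpl. ring.
Qed.

Lemma prodR_nonneg {A} (w : A -> R) c :
  (forall x, 0 <= w x) -> 0 <= prodR (map w c).
Proof. intros H; induction c; simpl; [lra | apply Rmult_le_pos; auto]. Qed.

Lemma sumR_flat {A} (F : list A -> R) (L : list (list A)) (dom : list A) :
  sumR (map F (flat_map (fun x => map (cons x) L) dom))
  = sumR (map (fun x => sumR (map (fun c => F (x :: c)) L)) dom).
Proof.
  induction dom; simpl; [reflexivity|].
  rewrite map_app, sumR_app, IHdom, map_map. reflexivity.
Qed.

Lemma all_lists_sum_prod (w : nat -> R) n dom :
  sumR (map (fun c => prodR (map w c)) (all_lists n dom)) = (sumR (map w dom)) ^ n.
Proof.
  induction n; simpl; [ring|].
  rewrite sumR_flat. simpl.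
  rewrite (sumR_ext _ (fun x => sumR (map w dom) ^ n * w x)).
  - rewrite sumR_scal. ring.
  - intros x _. rewrite sumR_scal, IHn. ring.
Qed.

Lemma all_lists_sym (w h : nat -> R) n dom :
  sumR (map (fun vs => prodR (map w vs) * sumR (map h vs)) (all_lists n dom))
  = INR n * (sumR (map w dom)) ^ (pred n) * sumR (map (fun m => w m * h m) dom).
Proof.
  induction n; simpl; [ring|].
  rewrite sumR_flat. simpl.
  rewrite (sumR_ext _ (fun x => sumR (map w dom) ^ n * (w x * h x)
     + (INR n * sumR (map w dom) ^ pred n * sumR (map (fun m => w m * h m) dom)) * w x)).
  - rewrite sumR_plus, !sumR_scal. destruct n; simpl; ring.
  - intros x _.
    rewrite (sumR_ext _ (fun c => w x * h x * prodR (map w c)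
                               + w x * (prodR (map w c) * sumR (map h c)))).
    + rewrite sumR_plus, !sumR_scal, all_lists_sum_prod, IHn. ring.
    + intros c _. simpl. ring.
Qed.

Lemma all_lists_in n dom (vs : list nat) :
  In vs (all_lists n dom) -> length vs = n /\ (forall v, In v vs -> In v dom).
Proof.
  revert vs; induction n; simpl; intros vs H.
  - destruct H as [<-|[]]. split; [reflexivity | intros v []].
  - apply in_flat_map in H. destruct H as [x [Hx Hin]].
    apply in_map_iff in Hin. destruct Hin as [c [<- Hc]].
    destruct (IHn c Hc) as [H1 H2]. simpl. split; [auto|].
    intros v [<-|Hv]; auto.
Qed.

Lemma all_lists_mono n (d1 d2 : list nat) (F : list nat -> R) :
  (forall l, 0 <= F l) ->
  sumR (map F (all_lists n d1)) <= sumR (map F (all_lists n (d1 ++ d2))).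
Proof.
  revert F; induction n; intros F HF; simpl; [lra|].
  rewrite !sumR_flat, map_app, sumR_app.
  rewrite <- (Rplus_0_r (sumR (map _ d1))) at 1.
  apply Rplus_le_compat.
  - apply sumR_le. intros. apply (IHn (fun c => F (x :: c))). auto.
  - apply sumR_nonneg. intros. apply sumR_nonneg. auto.
Qed.

Fixpoint ff (n l : nat) : R :=
  match l with O => 1 | S l' => ff n l' * INR (n - l') end.

Definition Bin (n : nat) (x : R) (l : nat) : R :=
  ff n l / INR (fact l) * x ^ l * (1 - x) ^ (n - l).

Fixpoint sumn (f : nat -> R) (n : nat) : R :=
  match n with O => 0 | S n' => sumn f n' + f n' end.

Lemma ff_S n l : ff (S n) (S l) = INR (S n) * ff n l.
Proof.
  induction l; simpl; [ring|].
  simpl in IHl. rewrite IHl. ring.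
Qed.

Lemma ff_big n l : (n < l)%nat -> ff n l = 0.
Proof.
  induction l; intros H; [lia|]. simpl.
  destruct (Nat.eq_dec n l) as [->|Hne].
  - rewrite Nat.sub_diag. simpl. ring.
  - rewrite IHl by lia. ring.
Qed.

Lemma Bin_0 x l : Bin 0 x l = if Nat.eqb 0 l then 1 else 0.
Proof.
  unfold Bin. destruct l.
  - simpl. field.
  - rewrite ff_big by lia. unfold Rdiv. simpl. ring.
Qed.

Lemma Bin_S0 n x : Bin (S n) x 0 = (1 - x) * Bin n x 0.
Proof. unfold Bin. simpl. rewrite Nat.sub_0_r. field. Qed.

Lemma Bin_SS n x l : Bin (S n) x (S l) = x * Bin n x l + (1 - x) * Bin n x (S l).
Proof.
  unfold Bin. rewrite ff_S. simpl (ff n (S l)).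
  replace (S n - S l)%nat with (n - l)%nat by lia.
  assert (Hf : INR (fact (S l)) = INR (S l) * INR (fact l))
    by (rewrite <- mult_INR; reflexivity).
  assert (Hfp : INR (fact l) <> 0) by apply INR_fact_neq_0.
  assert (HSl : INR (S l) <> 0) by (apply not_0_INR; lia).
  rewrite Hf.
  destruct (lt_eq_lt_dec l n) as [[Hlt|Heq]|Hgt].
  - destruct (n - l)%nat as [|k] eqn:Ek; [lia|].
    replace (n - S l)%nat with k by lia.
    replace (INR (n - l)) with (INR (S k)) by (rewrite Ek; reflexivity).
    assert (INR (S n) = INR (S l) + INR (S k)) by (rewrite <- plus_INR; f_equal; lia).
    rewrite H. simpl pow. field. split; auto.
  - subst. rewrite Nat.sub_diag. replace (INR 0) with 0 by reflexivity. simpl pow. field. split; auto.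
  - rewrite ff_big by lia. unfold Rdiv. ring.
Qed.

Lemma Bin_bounds n x l : 0 <= x <= 1 -> 0 <= Bin n x l <= 1.
Proof.
  intros Hx. revert l; induction n; intros l.
  - rewrite Bin_0. destruct (Nat.eqb 0 l); lra.
  - destruct l.
    + rewrite Bin_S0. specialize (IHn 0%nat). nra.
    + rewrite Bin_SS. pose proof (IHn l). pose proof (IHn (S l)). nra.
Qed.

(** ** The number of draws of a fixed colour is binomial *)

Lemma sumR_indicator_notin (g : nat -> R) i l :
  ~ In i l -> sumR (map (fun x => if Nat.eqb i x then g x else 0) l) = 0.
Proof.
  induction l as [|a l IH]; simpl; intros Hi; [reflexivity|].
  destruct (Nat.eqb_spec i a) as [->|_]; [now destruct Hi; left|].
  rewrite IH by tauto. ring.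
Qed.

Lemma sumR_indicator (g : nat -> R) i l :
  NoDup l -> In i l -> sumR (map (fun x => if Nat.eqb i x then g x else 0) l) = g i.
Proof.
  induction l as [|a l IH]; simpl; intros Hnd Hi; [tauto|].
  inversion Hnd as [|? ? Ha Hl]; subst.
  destruct (Nat.eqb_spec i a) as [->|Hne].
  - rewrite sumR_indicator_notin by auto. ring.
  - rewrite IH by (auto; destruct Hi; congruence). ring.
Qed.

Section ColourCount.
Variable w : nat -> R.
Variable K i : nat.
Hypothesis Hi : (i < K)%nat.
Hypothesis Hw : sumR (map w (seq 0 K)) = 1.

(** Conditioning on the first draw: colour i (probability w i) or not. *)
Lemma first_draw_split A B :
  sumR (map (fun x => w x * (if Nat.eqb i x then A else B)) (seq 0 K))
  = w i * A + (1 - w i) * B.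
Proof.
  rewrite (sumR_ext _ (fun x => B * w x + (if Nat.eqb i x then w x * (A - B) else 0))).
  - rewrite sumR_plus, sumR_scal, Hw, sumR_indicator; [ring | apply seq_NoDup |].
    apply in_seq. lia.
  - intros x _. destruct (Nat.eqb i x); ring.
Qed.

Lemma count_binomial n l :
  sumR (map (fun c => prodR (map w c) * (if Nat.eqb (tcount c i) l then 1 else 0))
    (all_lists n (seq 0 K))) = Bin n (w i) l.
Proof.
  revert l; induction n; intros l.
  - simpl. rewrite Bin_0. unfold tcount. simpl. destruct (Nat.eqb 0 l); ring.
  - simpl all_lists. rewrite sumR_flat.
    set (A := sumR (map (fun c => prodR (map w c) *
                 (if Nat.eqb (S (tcount c i)) l then 1 else 0)) (all_lists n (seq 0 K)))).
    rewrite (sumR_ext _ (fun x => w x * (if Nat.eqb i x then A else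
         sumR (map (fun c => prodR (map w c) * (if Nat.eqb (tcount c i) l then 1 else 0))
         (all_lists n (seq 0 K)))))).
    2:{ intros x _. destruct (Nat.eqb i x) eqn:E; unfold A; rewrite <- sumR_scal;
        apply sumR_ext; intros c _; unfold tcount; simpl; rewrite E; simpl; ring. }
    rewrite first_draw_split, IHn. unfold A. destruct l.
    + rewrite Bin_S0, (sumR_ext _ (fun c => 0 * prodR (map w c))) by (intros; simpl; ring).
      rewrite sumR_scal. ring.
    + rewrite Bin_SS. simpl Nat.eqb. rewrite IHn. ring.
Qed.

Lemma count_at_least n j :
  sumR (map (fun c => prodR (map w c) * (if Nat.leb j (tcount c i) then 1 else 0))
    (all_lists n (seq 0 K))) = 1 - sumn (fun l => Bin n (w i) l) j.
Proof.
  induction j.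
  - simpl. rewrite (sumR_ext _ (fun c => prodR (map w c))) by (intros; ring).
    rewrite all_lists_sum_prod, Hw, pow1. ring.
  - simpl sumn.
    replace (1 - _) with (1 - sumn (fun l => Bin n (w i) l) j - Bin n (w i) j) by ring.
    rewrite <- IHj, <- count_binomial, <- sumR_minus. apply sumR_ext. intros c _.
    destruct (Nat.leb_spec (S j) (tcount c i)); destruct (Nat.leb_spec j (tcount c i));
      destruct (Nat.eqb_spec (tcount c i) j); try lia; ring.
Qed.
End ColourCount.

Lemma totV_ge_length vs : (forall v, In v vs -> (1 <= v)%nat) -> (length vs <= totV vs)%nat.
Proof.
  induction vs; simpl; intros H; [lia|].
  assert (1 <= a)%nat by auto. assert (length vs <= totV vs)%nat by auto. lia.
Qed.

Lemma in_totV v vs : In v vs -> (v <= totV vs)%nat.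
Proof.
  induction vs; simpl; [tauto|]. intros [->|H]; [lia|]. specialize (IHvs H). lia.
Qed.

Lemma colour_weights_sum vs : (0 < totV vs)%nat ->
  sumR (map (fun i => INR (nth i vs 0%nat) / INR (totV vs)) (seq 0 (length vs))) = 1.
Proof.
  intros H. rewrite (sumR_seq_nth (fun v => INR v / INR (totV vs))).
  rewrite (sumR_ext _ (fun v => / INR (totV vs) * INR v)) by (intros; unfold Rdiv; ring).
  rewrite sumR_scal, sumR_INR. field. apply not_0_INR. lia.
Qed.

Lemma cond_exp_colour_count p (b : nat -> bool) (f : list nat -> list nat -> nat) vs :
  (forall c, f vs c = length (filter (fun i => b (tcount c i)) (seq 0 (length vs)))) ->
  (forall v, In v vs -> (1 <= v)%nat) ->
  cond_exp p f vs =
  sumR (map (fun i => sumR (map (fun c =>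
            prodR (map (fun k => INR (nth k vs 0%nat) / INR (totV vs)) c)
            * (if b (tcount c i) then 1 else 0))
          (all_lists (ndraws p (totV vs)) (seq 0 (length vs)))))
       (seq 0 (length vs))).
Proof.
  intros Hf Hv. unfold cond_exp. rewrite sumR_swap. apply sumR_ext. intros c _.
  rewrite Hf, INR_length_filter, <- sumR_scal. apply sumR_ext. intros. ring.
Qed.

Lemma cond_exp_W p j vs : (forall v, In v vs -> (1 <= v)%nat) ->
  cond_exp p (W j) vs =
  sumR (map (fun v => Bin (ndraws p (totV vs)) (INR v / INR (totV vs)) j) vs).
Proof.
  intros Hv. rewrite (cond_exp_colour_count p (fun t => Nat.eqb t j)) by auto.
  rewrite <- (sumR_seq_nth (fun v => Bin _ (INR v / INR (totV vs)) j)).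
  apply sumR_ext. intros i Hi. apply in_seq in Hi.
  apply count_binomial; [lia|].
  apply colour_weights_sum. pose proof (totV_ge_length vs Hv). lia.
Qed.

Lemma cond_exp_Wplus p j vs : (forall v, In v vs -> (1 <= v)%nat) ->
  cond_exp p (Wplus j) vs =
  sumR (map (fun v => 1 - sumn (fun l => Bin (ndraws p (totV vs)) (INR v / INR (totV vs)) l) j) vs).
Proof.
  intros Hv. rewrite (cond_exp_colour_count p (Nat.leb j)) by auto.
  rewrite <- (sumR_seq_nth (fun v => 1 - sumn (fun l => Bin _ (INR v / INR (totV vs)) l) j)).
  apply sumR_ext. intros i Hi. apply in_seq in Hi.
  apply count_at_least; [lia|].
  apply colour_weights_sum. pose proof (totV_ge_length vs Hv). lia.
Qed.

Lemma cond_exp_nonneg p f vs : 0 <= cond_exp p f vs.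
Proof.
  unfold cond_exp. apply sumR_nonneg. intros c _. apply Rmult_le_pos; [|apply pos_INR].
  apply prodR_nonneg. intros x. destruct (totV vs) eqn:E.
  - simpl. unfold Rdiv. rewrite Rinv_0. lra.
  - apply Rle_mult_inv_pos; [apply pos_INR | apply lt_0_INR; lia].
Qed.

Lemma cv_const c : Un_cv (fun _ => c) c.
Proof.
  intros e He. exists 0%nat. intros. unfold R_dist. rewrite Rminus_diag, Rabs_R0. lra.
Qed.

Lemma cv_ev (u v : nat -> R) l N :
  (forall n, (n >= N)%nat -> u n = v n) -> Un_cv v l -> Un_cv u l.
Proof.
  intros H Hv e He. destruct (Hv e He) as [N1 HN1]. exists (max N N1). intros n Hn.
  rewrite H by lia. apply HN1. lia.
Qed.

Lemma cv_unshift (u : nat -> R) l : Un_cv (fun n => u (S n)) l -> Un_cv u l.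
Proof.
  intros H e He. destruct (H e He) as [N HN]. exists (S N). intros n Hn.
  destruct n; [lia|]. apply HN. lia.
Qed.

Lemma cv_shift_add (u : nat -> R) l j : Un_cv u l -> Un_cv (fun n => u (j + n)%nat) l.
Proof. intros H e He. destruct (H e He) as [N HN]. exists N. intros n Hn. apply HN. lia. Qed.

Lemma cv_err (u : nat -> R) l c N0 :
  (forall V, (V >= N0)%nat -> (V >= 1)%nat -> Rabs (u V - l) <= c / INR V) -> Un_cv u l.
Proof.
  intros H e He. destruct (INR_archimed e (Rabs c) He) as [n Hn].
  exists (max (max n 1) N0). intros V HV. unfold R_dist.
  assert (HVp : 0 < INR V) by (apply lt_0_INR; lia).
  assert (INR n <= INR V) by (apply le_INR; lia).
  eapply Rle_lt_trans; [apply H; lia|].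
  apply (Rmult_lt_reg_r (INR V)); auto. unfold Rdiv. rewrite Rmult_assoc, Rinv_l by lra.
  assert (c <= Rabs c) by apply Rle_abs. nra.
Qed.

Lemma squeeze (a b c : nat -> R) l N :
  (forall n, (n >= N)%nat -> a n <= b n <= c n) -> Un_cv a l -> Un_cv c l -> Un_cv b l.
Proof.
  intros H Ha Hc e He. destruct (Ha e He) as [N1 H1]. destruct (Hc e He) as [N2 H2].
  exists (max N (max N1 N2)). intros n Hn. specialize (H n ltac:(lia)).
  specialize (H1 n ltac:(lia)). specialize (H2 n ltac:(lia)). unfold R_dist in *.
  apply Rabs_def2 in H1. apply Rabs_def2 in H2. apply Rabs_def1; lra.
Qed.

Lemma lim_dist_le (u v : nat -> R) a b B :
  Un_cv u a -> Un_cv v b -> (forall n, Rabs (u n - v n) <= B) -> Rabs (a - b) <= B.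
Proof.
  intros Hu Hv H.
  eapply Rle_cv_lim; [exact H | | apply cv_const].
  apply cv_cvabs, CV_minus; auto.
Qed.

Lemma cv_pow (u : nat -> R) l k : Un_cv u l -> Un_cv (fun n => u n ^ k) (l ^ k).
Proof. intros H. induction k; simpl; [apply cv_const | apply CV_mult; auto]. Qed.

Lemma cv_uniform_finite (u : nat -> nat -> R) (phi : nat -> R) N e : e > 0 ->
  (forall m, (1 <= m)%nat -> Un_cv (fun V => u V m) (phi m)) ->
  exists V0, forall V m, (V >= V0)%nat -> (1 <= m <= N)%nat -> Rabs (u V m - phi m) < e.
Proof.
  intros He H. induction N.
  - exists 0%nat. intros; lia.
  - destruct IHN as [V1 H1]. destruct (H (S N) ltac:(lia) e He) as [V2 H2].
    exists (max V1 V2). intros V m HV Hm. destruct (Nat.eq_dec m (S N)) as [->|].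
    + apply H2. lia.
    + apply H1; lia.
Qed.

Lemma sumn_sum_f f N : sumn f (S N) = sum_f_R0 f N.
Proof. induction N; simpl; [ring|]. simpl in IHN. rewrite <- IHN. ring. Qed.

Lemma sumn_nonneg f j : (forall l, 0 <= f l) -> 0 <= sumn f j.
Proof. intros H. induction j; simpl; [lra|]. pose proof (H j). lra. Qed.

Lemma sumn_abs_bd f j : (forall l, Rabs (f l) <= 1) -> Rabs (sumn f j) <= INR j.
Proof.
  intros H. induction j; simpl sumn; [rewrite Rabs_R0; simpl; lra|].
  rewrite S_INR. eapply Rle_trans; [apply Rabs_triang|]. pose proof (H j). lra.
Qed.

Lemma sumn_shift f j L : sumn f (j + L) = sumn f j + sumn (fun l => f (j + l)%nat) L.
Proof.
  induction L; simpl; [rewrite Nat.add_0_r; ring|].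
  rewrite Nat.add_succ_r. simpl. rewrite IHL. ring.
Qed.

Lemma cv_sumn (g : nat -> nat -> R) h j :
  (forall l, Un_cv (fun V => g V l) (h l)) -> Un_cv (fun V => sumn (g V) j) (sumn h j).
Proof. intros H. induction j; simpl; [apply cv_const | apply CV_plus; auto]. Qed.

Lemma inf_sum_ext a b l : (forall m, a m = b m) -> infinite_sum a l -> infinite_sum b l.
Proof.
  intros H Ha. apply (cv_ev _ (fun N => sum_f_R0 a N) _ 0); auto.
  intros N _. apply sum_eq. intros; auto.
Qed.

Lemma inf_sum_plus a b la lb : infinite_sum a la -> infinite_sum b lb ->
  infinite_sum (fun m => a m + b m) (la + lb).
Proof.
  intros Ha Hb. apply (cv_ev _ (fun N => sum_f_R0 a N + sum_f_R0 b N) _ 0);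
    [intros; apply sum_plus | apply CV_plus; auto].
Qed.

Lemma inf_sum_minus a b la lb : infinite_sum a la -> infinite_sum b lb ->
  infinite_sum (fun m => a m - b m) (la - lb).
Proof.
  intros Ha Hb. apply (cv_ev _ (fun N => sum_f_R0 a N - sum_f_R0 b N) _ 0);
    [intros; apply minus_sum | apply CV_minus; auto].
Qed.

Lemma inf_sum_zero : infinite_sum (fun _ => 0) 0.
Proof.
  apply (cv_ev _ (fun _ => 0) _ 0); [|apply cv_const].
  intros N _. induction N; simpl; [reflexivity | rewrite IHN; ring].
Qed.

(** ** Poisson limit of the binomial law of a colour with m balls *)

(** Poisson(p m) probability of l; note [Qterm q p j m = q m * pois p m j]. *)
Definition pois (p : R) (m l : nat) : R :=
  (p * INR m) ^ l / INR (fact l) * exp (- (p * INR m)).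

Lemma exp_le_inv x y : exp x <= exp y -> x <= y.
Proof. intros H. destruct (Rle_lt_dec x y); auto. apply exp_increasing in r. lra. Qed.

(** -t/(1-t) <= ln(1-t) <= -t, from 1 + x <= exp x. *)
Lemma ln_one_minus_bounds t : 0 <= t < 1 -> - t / (1 - t) <= ln (1 - t) <= - t.
Proof.
  intros Ht. split; apply exp_le_inv; rewrite exp_ln by lra.
  - pose proof (exp_ineq1_le (t / (1 - t))) as H.
    replace (1 + t / (1 - t)) with (/ (1 - t)) in H by (field; lra).
    replace (- t / (1 - t)) with (- (t / (1 - t))) by (field; lra).
    rewrite exp_Ropp. apply (Rle_trans _ (/ / (1 - t))); [|rewrite Rinv_inv; lra].
    apply Rinv_le_contravar; [apply Rinv_0_lt_compat; lra | exact H].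
  - pose proof (exp_ineq1_le (- t)). lra.
Qed.

Lemma INR_sub_bd n l : INR n - INR l <= INR (n - l) <= INR n.
Proof.
  destruct (le_lt_dec l n).
  - rewrite minus_INR by auto. pose proof (pos_INR l). lra.
  - replace (n - l)%nat with 0%nat by lia. simpl.
    assert (INR n < INR l) by (apply lt_INR; auto). pose proof (pos_INR n). lra.
Qed.

Lemma inv_one_minus_ratio_cv m : Un_cv (fun V => / (1 - INR m / INR V)) 1.
Proof.
  apply (cv_err _ _ (2 * INR m) (S (2 * m))). intros V HV _.
  assert (H : INR (S (2 * m)) <= INR V) by (apply le_INR; lia).
  rewrite S_INR, mult_INR in H. simpl (INR 2) in H. pose proof (pos_INR m).
  replace (/ (1 - INR m / INR V) - 1) with (INR m / (INR V - INR m)) by (field; lra).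
  rewrite Rabs_right by (apply Rle_ge, Rle_mult_inv_pos; lra).
  unfold Rdiv. apply (Rmult_le_reg_r (INR V * (INR V - INR m))); [nra|].
  replace (INR m * / (INR V - INR m) * (INR V * (INR V - INR m))) with (INR m * INR V)
    by (field; lra).
  replace (2 * INR m * / INR V * (INR V * (INR V - INR m)))
    with (2 * INR m * (INR V - INR m)) by (field; lra).
  nra.
Qed.

Section Poisson.
Variable p : R.
Hypothesis hp : 0 < p < 1.

Lemma ndraws_bd V : p * INR V - 1 < INR (ndraws p V) <= p * INR V.
Proof.
  unfold ndraws. destruct (base_Int_part (p * INR V)) as [H1 H2].
  assert (0 <= p * INR V) by (apply Rmult_le_pos; [lra | apply pos_INR]).
  assert (Hz : (0 <= Int_part (p * INR V))%Z).
  { apply le_IZR. destruct (Z_lt_le_dec (Int_part (p * INR V)) 0) as [Hlt|Hle];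
      [|apply IZR_le; auto].
    assert (H4 : (Int_part (p * INR V) <= -1)%Z) by lia. apply IZR_le in H4. lra. }
  rewrite (INR_IZR_INZ (Z.to_nat _)), Z2Nat.id by exact Hz. lra.
Qed.

Lemma ndraws_sub_bd l V : Rabs (INR (ndraws p V - l) - p * INR V) <= INR l + 1.
Proof.
  pose proof (INR_sub_bd (ndraws p V) l). pose proof (ndraws_bd V). pose proof (pos_INR l).
  apply Rabs_le. lra.
Qed.

Lemma cv_ratio (a : nat -> R) c :
  (forall V, Rabs (a V - p * INR V) <= c) -> Un_cv (fun V => a V / INR V) p.
Proof.
  intros H. apply (cv_err _ _ c 1). intros V _ HV.
  assert (HVp : 0 < INR V) by (apply lt_0_INR; lia).
  replace (a V / INR V - p) with ((a V - p * INR V) / INR V) by (field; lra).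
  unfold Rdiv. rewrite Rabs_mult, Rabs_inv, (Rabs_right (INR V)) by lra.
  apply Rmult_le_compat_r; [left; apply Rinv_0_lt_compat; lra | auto].
Qed.

Lemma falling_factorial_cv m l :
  Un_cv (fun V => ff (ndraws p V) l * (INR m / INR V) ^ l) ((p * INR m) ^ l).
Proof.
  induction l.
  - simpl. apply (cv_ev _ (fun _ => 1) 1 0); [intros; ring | apply cv_const].
  - apply (cv_ev _ (fun V => (ff (ndraws p V) l * (INR m / INR V) ^ l)
                     * (INR (ndraws p V - l) / INR V * INR m)) _ 0).
    { intros; simpl; unfold Rdiv; ring. }
    replace ((p * INR m) ^ S l) with ((p * INR m) ^ l * (p * INR m)) by (simpl; ring).
    apply CV_mult; auto. apply CV_mult; [|apply cv_const].
    apply (cv_ratio _ (INR l + 1)). intros; apply ndraws_sub_bd.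
Qed.

Lemma survival_factor_cv m (k : nat -> nat) c :
  (forall V, Rabs (INR (k V) - p * INR V) <= c) ->
  Un_cv (fun V => (1 - INR m / INR V) ^ (k V)) (exp (- (p * INR m))).
Proof.
  intros Hk. set (t := fun V => INR m / INR V).
  assert (Hlarge : forall V, (V >= S m)%nat -> 0 <= INR m < INR V).
  { intros V HV. split; [apply pos_INR | apply lt_INR; lia]. }
  assert (Ht : forall V, (V >= S m)%nat -> 0 <= t V < 1).
  { intros V HV. destruct (Hlarge V HV). unfold t. split.
    - apply Rle_mult_inv_pos; lra.
    - apply (Rmult_lt_reg_r (INR V)); [lra|].
      unfold Rdiv. rewrite Rmult_assoc, Rinv_l by lra. lra. }
  (* (1 - t)^k = exp (k ln (1 - t)), and k ln(1 - t) is squeezed between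
     -k t / (1 - t) and -k t, both tending to -p m. *)
  apply (cv_ev _ (fun V => exp (INR (k V) * ln (1 - t V))) _ (S m)).
  { intros V HV. pose proof (Ht V HV). unfold t in *.
    rewrite <- Rpower_pow by lra. reflexivity. }
  apply continuity_seq; [apply derivable_continuous, derivable_exp|].
  assert (Hlin : Un_cv (fun V => - (INR (k V) / INR V * INR m)) (- (p * INR m))).
  { apply CV_opp, CV_mult; [apply (cv_ratio _ c); auto | apply cv_const]. }
  apply (squeeze (fun V => - (INR (k V) / INR V * INR m) * / (1 - t V)) _
    (fun V => - (INR (k V) / INR V * INR m)) _ (S m)); auto.
  - intros V HV. pose proof (Hlarge V HV). pose proof (ln_one_minus_bounds _ (Ht V HV)).
    pose proof (pos_INR (k V)).
    replace (- (INR (k V) / INR V * INR m) * / (1 - t V))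
      with (INR (k V) * (- t V / (1 - t V))) by (unfold t; field; lra).
    replace (- (INR (k V) / INR V * INR m)) with (INR (k V) * (- t V))
      by (unfold t; field; lra).
    split; apply Rmult_le_compat_l; lra.
  - replace (- (p * INR m)) with (- (p * INR m) * 1) by ring.
    apply CV_mult; [exact Hlin | apply inv_one_minus_ratio_cv].
Qed.

Lemma binomial_poisson_limit m l :
  Un_cv (fun V => Bin (ndraws p V) (INR m / INR V) l) (pois p m l).
Proof.
  unfold Bin, pois.
  apply (cv_ev _ (fun V => (ff (ndraws p V) l * (INR m / INR V) ^ l) * / INR (fact l) *
      (1 - INR m / INR V) ^ (ndraws p V - l)) _ 0); [intros; unfold Rdiv; ring|].
  apply CV_mult; [apply CV_mult; [apply falling_factorial_cv | apply cv_const]|].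
  apply (survival_factor_cv m (fun V => (ndraws p V - l)%nat) (INR l + 1)).
  intros; apply ndraws_sub_bd.
Qed.

Lemma exp_series x : Un_cv (fun N => sum_f_R0 (fun i => / INR (fact i) * x ^ i) N) (exp x).
Proof. exact (proj2_sig (exist_exp x)). Qed.

Lemma pois_nonneg m l : 0 <= pois p m l.
Proof.
  unfold pois. pose proof (exp_pos (- (p * INR m))).
  assert (0 <= p * INR m) by (apply Rmult_le_pos; [lra | apply pos_INR]).
  apply Rmult_le_pos; [|lra].
  apply Rle_mult_inv_pos; [apply pow_le; auto | apply INR_fact_lt_0].
Qed.

Lemma sumn_pois m j :
  sumn (pois p m) j = exp (- (p * INR m)) * sumn (fun i => / INR (fact i) * (p * INR m) ^ i) j.
Proof. induction j; simpl; [ring|]. rewrite IHj. unfold pois, Rdiv. ring. Qed.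

Lemma pois_partial_sum_bounds m j : 0 <= sumn (pois p m) j <= 1.
Proof.
  split; [apply sumn_nonneg, pois_nonneg|].
  rewrite sumn_pois. destruct j; [simpl; lra|]. rewrite sumn_sum_f.
  assert (Hx : 0 <= p * INR m) by (apply Rmult_le_pos; [lra | apply pos_INR]).
  set (x := p * INR m) in *.
  assert (sum_f_R0 (fun i => / INR (fact i) * x ^ i) j <= exp x).
  { apply sum_incr; [apply exp_series|]. intros i.
    apply Rmult_le_pos; [left; apply Rinv_0_lt_compat, INR_fact_lt_0 | apply pow_le; auto]. }
  rewrite exp_Ropp. apply (Rmult_le_reg_l (exp x)); [apply exp_pos|].
  rewrite <- Rmult_assoc, Rinv_r by (pose proof (exp_pos x); lra). lra.
Qed.

Lemma pois_bounds m l : 0 <= pois p m l <= 1.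
Proof.
  pose proof (pois_partial_sum_bounds m (S l)). pose proof (pois_partial_sum_bounds m l).
  pose proof (pois_nonneg m l). simpl in *. lra.
Qed.

Lemma pois_partial_sum_cv m : Un_cv (fun N => sumn (pois p m) N) 1.
Proof.
  apply cv_unshift.
  apply (cv_ev _ (fun N => exp (- (p * INR m)) *
                   sum_f_R0 (fun i => / INR (fact i) * (p * INR m) ^ i) N) _ 0).
  { intros; rewrite sumn_pois, sumn_sum_f; reflexivity. }
  replace 1 with (exp (- (p * INR m)) * exp (p * INR m))
    by (rewrite <- exp_plus, Rplus_opp_l; apply exp_0).
  apply CV_mult; [apply cv_const | apply exp_series].
Qed.

End Poisson.

(** ** Averaging over the i.i.d. urn contents *)

Lemma ratio_bd V m : (m <= V)%nat -> 0 <= INR m / INR V <= 1.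
Proof.
  intros H. destruct V.
  - replace m with 0%nat by lia. simpl. unfold Rdiv. rewrite Rmult_0_l. lra.
  - assert (0 < INR (S V)) by (apply lt_0_INR; lia).
    assert (INR m <= INR (S V)) by (apply le_INR; auto). pose proof (pos_INR m).
    split; [apply Rle_mult_inv_pos; lra|].
    apply (Rmult_le_reg_r (INR (S V))); auto.
    unfold Rdiv. rewrite Rmult_assoc, Rinv_l by lra. lra.
Qed.

Lemma pow_le1 x k : 0 <= x <= 1 -> x ^ k <= 1.
Proof. intros H. induction k; simpl; [lra|]. pose proof (pow_le x k ltac:(lra)). nra. Qed.

Section LawOfV.
Variable q : nat -> R.
Hypothesis hq_nonneg : forall m, 0 <= q m.
Hypothesis hq0 : q 0%nat = 0.
Hypothesis hq_sum : infinite_sum q 1.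

Lemma mass_bounds M : 0 <= sumR (map q (seq 1 M)) <= 1.
Proof.
  split; [apply sumR_nonneg; auto|].
  rewrite sumR_seq1, hq0, Rminus_0_r.
  apply sum_incr; auto.
Qed.

Lemma mass_cv : Un_cv (fun M => sumR (map q (seq 1 M))) 1.
Proof.
  apply (cv_ev _ (fun M => sum_f_R0 q M) _ 0); [|exact hq_sum].
  intros; rewrite sumR_seq1, hq0; ring.
Qed.

Lemma tail_mass_bd N M :
  sumR (map (fun m => if Nat.leb m N then 0 else q m) (seq 1 M)) <= 1 - sum_f_R0 q N.
Proof.
  set (g := fun m => if Nat.leb m N then 0 else q m).
  assert (Hg : forall x, 0 <= g x) by (intros x; unfold g; destruct (Nat.leb x N); auto; lra).
  apply (Rle_trans _ (sumR (map g (seq 1 (N + M))))).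
  { replace (N + M)%nat with (M + N)%nat by lia. rewrite seq_app, map_app, sumR_app.
    pose proof (sumR_nonneg g (seq (1 + M) N) (fun x _ => Hg x)). lra. }
  rewrite seq_app, map_app, sumR_app.
  rewrite (sumR_ext g (fun _ => 0 * 0) (seq 1 N)), sumR_scal.
  2:{ intros x Hx. apply in_seq in Hx. unfold g.
      replace (Nat.leb x N) with true by (symmetry; apply Nat.leb_le; lia). ring. }
  rewrite (sumR_ext g q (seq (1 + N) M)).
  2:{ intros x Hx. apply in_seq in Hx. unfold g.
      replace (Nat.leb x N) with false by (symmetry; apply Nat.leb_gt; lia). reflexivity. }
  pose proof (mass_bounds (N + M)) as H.
  rewrite seq_app, map_app, sumR_app, (sumR_seq1 q N), hq0 in H. lra.
Qed.

Lemma tail_small d : d > 0 -> exists N, 1 - sum_f_R0 q N < d.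
Proof.
  intros Hd. destruct (hq_sum d Hd) as [N HN]. exists N. specialize (HN N (le_n _)).
  unfold R_dist in HN. apply Rabs_def2 in HN. lra.
Qed.

Lemma split_mass_bd (h : nat -> R) N eta B M :
  0 <= eta -> 0 <= B -> 1 - sum_f_R0 q N < eta ->
  (forall m, (1 <= m <= N)%nat -> h m <= eta) -> (forall m, (N < m)%nat -> h m <= B) ->
  sumR (map (fun m => q m * h m) (seq 1 M)) <= eta + B * eta.
Proof.
  intros Heta HB HN Hsmall Hbig.
  apply (Rle_trans _ (sumR (map (fun m => eta * q m + B * (if Nat.leb m N then 0 else q m))
                          (seq 1 M)))).
  - apply sumR_le. intros m Hm. apply in_seq in Hm.
    pose proof (hq_nonneg m).
    destruct (Nat.leb_spec m N) as [Hle|Hgt];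
      [pose proof (Hsmall m ltac:(lia)) | pose proof (Hbig m Hgt)]; nra.
  - rewrite sumR_plus, !sumR_scal. pose proof (mass_bounds M). pose proof (tail_mass_bd N M).
    nra.
Qed.

Lemma weighted_series_cv0 (g : nat -> nat -> R) (s : nat -> R) :
  (forall L m, 0 <= g L m <= 1) -> (forall m, Un_cv (fun L => g L m) 0) ->
  (forall L, infinite_sum (fun m => q m * g L m) (s L)) -> Un_cv s 0.
Proof.
  intros Hg Hcv Hs e He.
  set (eta := e / 3). assert (Heta : eta > 0) by (unfold eta; lra).
  destruct (tail_small eta Heta) as [N HN].
  destruct (cv_uniform_finite g (fun _ => 0) N eta Heta (fun m _ => Hcv m)) as [L0 HL0].
  exists L0. intros L HL. unfold R_dist.
  assert (Hb : forall M, Rabs (sum_f_R0 (fun m => q m * g L m) M - 0) <= eta + 1 * eta).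
  { intros M.
    replace (sum_f_R0 (fun m => q m * g L m) M - 0)
      with (sumR (map (fun m => q m * g L m) (seq 1 M))) by (rewrite sumR_seq1, hq0; ring).
    rewrite Rabs_right
      by (apply Rle_ge, sumR_nonneg; intros; apply Rmult_le_pos; [|apply Hg]; auto).
    apply (split_mass_bd _ N); try lra; [|intros m _; apply Hg].
    intros m Hm. specialize (HL0 L m HL Hm). rewrite Rminus_0_r in HL0.
    pose proof (Rle_abs (g L m)). lra. }
  pose proof (lim_dist_le _ _ _ _ _ (Hs L) (cv_const 0) Hb). unfold eta in *. lra.
Qed.

Section Averaging.
Variable p : R.
Variable f : list nat -> list nat -> nat.
Variables (psi : nat -> nat -> R) (phi : nat -> R) (C Phi : R).
Hypothesis Hpsi : forall V m, (m <= V)%nat -> Rabs (psi V m) <= C.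
Hypothesis Hphi : forall m, Rabs (phi m) <= C.
Hypothesis Hcond : forall vs, (forall v, In v vs -> (1 <= v)%nat) ->
  cond_exp p f vs = sumR (map (fun v => psi (totV vs) v) vs).
Hypothesis Hcv : forall m, (1 <= m)%nat -> Un_cv (fun V => psi V m) (phi m).
Hypothesis HPhi : infinite_sum (fun m => q m * phi m) Phi.

Lemma positive_entries K M vs :
  In vs (all_lists K (seq 1 M)) -> length vs = K /\ (forall v, In v vs -> (1 <= v)%nat).
Proof.
  intros H. apply all_lists_in in H. destruct H as [H1 H2]. split; auto.
  intros v Hv. apply H2, in_seq in Hv. lia.
Qed.

Lemma trunc_exp_eq K M : trunc_exp q p K M f =
  sumR (map (fun vs => prodR (map q vs) * sumR (map (fun v => psi (totV vs) v) vs))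
            (all_lists K (seq 1 M))).
Proof.
  unfold trunc_exp. apply sumR_ext. intros vs Hvs.
  rewrite Hcond; [reflexivity | apply (positive_entries K M vs Hvs)].
Qed.

(** E(f) exists: the truncated expectations increase with M and are at most K C. *)
Lemma expectation_exists K : {E | is_expect q p K f E}.
Proof.
  apply growing_cv.
  - intros M. unfold trunc_exp. rewrite seq_S. apply all_lists_mono. intros l.
    apply Rmult_le_pos; [apply prodR_nonneg; auto | apply cond_exp_nonneg].
  - exists (INR K * C). intros x [M ->]. rewrite trunc_exp_eq.
    apply (Rle_trans _ (sumR (map (fun vs => (INR K * C) * prodR (map q vs))
                                  (all_lists K (seq 1 M))))).
    + apply sumR_le. intros vs Hvs. destruct (positive_entries K M vs Hvs) as [Hl Hv].
      assert (Habs : Rabs (sumR (map (fun v => psi (totV vs) v) vs)) <= INR K * C).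
      { rewrite <- Hl, <- sumR_const.
        apply sumR_abs_le. intros v Hin. apply Hpsi, in_totV, Hin. }
      pose proof (prodR_nonneg q vs hq_nonneg).
      pose proof (Rle_abs (sumR (map (fun v => psi (totV vs) v) vs))). nra.
    + rewrite sumR_scal, all_lists_sum_prod.
      pose proof (mass_bounds M). pose proof (pos_INR K).
      pose proof (Hphi 0%nat). pose proof (Rabs_pos (phi 0%nat)).
      assert (sumR (map q (seq 1 M)) ^ K <= 1) by (apply pow_le1; lra).
      assert (0 <= INR K * C) by (apply Rmult_le_pos; lra). nra.
Qed.

Definition phi_average (K M : nat) : R :=
  sumR (map (fun vs => prodR (map q vs) * sumR (map phi vs)) (all_lists K (seq 1 M))).

Lemma phi_average_cv K : Un_cv (phi_average K) (INR K * Phi).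
Proof.
  apply (cv_ev _ (fun M => INR K * sumR (map q (seq 1 M)) ^ pred K
                            * sum_f_R0 (fun m => q m * phi m) M) _ 0).
  { intros M _. unfold phi_average. rewrite all_lists_sym, (sumR_seq1 (fun m => q m * phi m)), hq0. ring. }
  replace (INR K * Phi) with (INR K * 1 ^ pred K * Phi) by (rewrite pow1; ring).
  apply CV_mult; [apply CV_mult; [apply cv_const | apply cv_pow, mass_cv] | exact HPhi].
Qed.

(** Key estimate: if psi_V is eta-close to phi on {1..N} for V >= K and the
    q-mass beyond N is < eta, then E(f) and K E(phi(v)) differ by O(K eta);
    this uses V >= K, as every v_i >= 1. *)
Lemma trunc_exp_close K N eta M :
  0 < eta -> 1 - sum_f_R0 q N < eta ->
  (forall V m, (K <= V)%nat -> (1 <= m <= N)%nat -> Rabs (psi V m - phi m) < eta) ->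
  Rabs (trunc_exp q p K M f - phi_average K M) <= INR K * (eta + 2 * C * eta).
Proof.
  intros Heta HN Hclose.
  set (h := fun v : nat => if Nat.leb v N then eta else 2 * C).
  assert (HC : 0 <= C) by (pose proof (Hphi 0%nat); pose proof (Rabs_pos (phi 0%nat)); lra).
  rewrite trunc_exp_eq. unfold phi_average. rewrite <- sumR_minus.
  apply (Rle_trans _ (sumR (map (fun vs => prodR (map q vs) * sumR (map h vs))
                               (all_lists K (seq 1 M))))).
  - apply sumR_abs_le. intros vs Hvs. destruct (positive_entries _ _ vs Hvs) as [Hl Hv].
    pose proof (prodR_nonneg q vs hq_nonneg).
    rewrite <- Rmult_minus_distr_l, <- sumR_minus, Rabs_mult, (Rabs_right (prodR _)) by lra.
    apply Rmult_le_compat_l; auto. apply sumR_abs_le. intros v Hin. unfold h.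
    assert (HvV : (v <= totV vs)%nat) by (apply in_totV; auto).
    destruct (Nat.leb_spec v N).
    + left. apply Hclose; [pose proof (totV_ge_length vs Hv); lia | split; auto].
    + eapply Rle_trans; [apply Rabs_triang|]. rewrite Rabs_Ropp.
      pose proof (Hpsi _ _ HvV). pose proof (Hphi v). lra.
  - rewrite all_lists_sym.
    assert (Hs : sumR (map (fun m => q m * h m) (seq 1 M)) <= eta + 2 * C * eta).
    { apply (split_mass_bd h N); try lra.
      - intros m Hm. unfold h. destruct (Nat.leb_spec m N); [lra | lia].
      - intros m Hm. unfold h. destruct (Nat.leb_spec m N); [lia | lra]. }
    assert (Hh : 0 <= sumR (map (fun m => q m * h m) (seq 1 M))).
    { apply sumR_nonneg. intros m _. unfold h.
      apply Rmult_le_pos; auto. destruct (Nat.leb m N); lra. }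
    pose proof (mass_bounds M). pose proof (pos_INR K).
    assert (sumR (map q (seq 1 M)) ^ pred K <= 1) by (apply pow_le1; lra).
    assert (0 <= sumR (map q (seq 1 M)) ^ pred K) by (apply pow_le; lra).
    assert (sumR (map q (seq 1 M)) ^ pred K * sumR (map (fun m => q m * h m) (seq 1 M))
            <= eta + 2 * C * eta) by nra.
    nra.
Qed.

Theorem averaging_limit : exists EW : nat -> R,
  (forall K, is_expect q p K f (EW K)) /\ Un_cv (fun K => EW (S K) / INR (S K)) Phi.
Proof.
  exists (fun K => proj1_sig (expectation_exists K)).
  split; [intros K; exact (proj2_sig (expectation_exists K))|].
  intros e He.
  assert (HC : 0 <= C) by (pose proof (Hphi 0%nat); pose proof (Rabs_pos (phi 0%nat)); lra).
  set (eta := e / (2 * (1 + 2 * C))).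
  assert (Heta : eta > 0) by (unfold eta; apply Rdiv_lt_0_compat; lra).
  assert (Hsmall : eta + 2 * C * eta < e)
    by (replace (eta + 2 * C * eta) with (e / 2) by (unfold eta; field; lra); lra).
  destruct (tail_small eta Heta) as [N HN].
  destruct (cv_uniform_finite psi phi N eta Heta Hcv) as [V0 HV0].
  exists V0. intros K HK. unfold R_dist.
  destruct (expectation_exists (S K)) as [E HE]. cbn [proj1_sig].
  assert (Hd : Rabs (E - INR (S K) * Phi) <= INR (S K) * (eta + 2 * C * eta)).
  { apply (lim_dist_le _ _ _ _ _ HE (phi_average_cv (S K))).
    intros M. apply (trunc_exp_close (S K) N); auto.
    intros V m HV Hm. apply HV0; [lia | exact Hm]. }
  assert (HSK : 0 < INR (S K)) by (apply lt_0_INR; lia).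
  replace (E / INR (S K) - Phi) with ((E - INR (S K) * Phi) / INR (S K)) by (field; lra).
  unfold Rdiv. rewrite Rabs_mult, Rabs_inv, (Rabs_right (INR (S K))) by lra.
  apply (Rmult_lt_reg_r (INR (S K))); auto. rewrite Rmult_assoc, Rinv_l by lra. nra.
Qed.
End Averaging.

Section Statistics.
Variable p : R.
Hypothesis hp : 0 < p < 1.

Lemma Qterm_bounds j m : 0 <= Qterm q p j m <= q m.
Proof.
  change (Qterm q p j m) with (q m * pois p m j).
  pose proof (pois_bounds p hp m j). pose proof (hq_nonneg m). split; nra.
Qed.

Lemma tail_weight_bounds j m : 0 <= q m * (1 - sumn (pois p m) j) <= q m.
Proof.
  pose proof (pois_partial_sum_bounds p hp m j). pose proof (hq_nonneg m). split; nra.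
Qed.

Lemma expectation_W_limit j Qj : infinite_sum (Qterm q p j) Qj ->
  exists EW : nat -> R,
    (forall K, is_expect q p K (W j) (EW K)) /\ Un_cv (fun K => EW (S K) / INR (S K)) Qj.
Proof.
  intros HQ.
  apply (averaging_limit p (W j) (fun V m => Bin (ndraws p V) (INR m / INR V) j)
           (fun m => pois p m j) 1 Qj).
  - intros V m H. pose proof (Bin_bounds (ndraws p V) _ j (ratio_bd V m H)).
    rewrite Rabs_right; lra.
  - intros m. pose proof (pois_bounds p hp m j). rewrite Rabs_right; lra.
  - intros vs Hv. apply cond_exp_W; auto.
  - intros m _. apply binomial_poisson_limit; auto.
  - exact HQ.
Qed.

Lemma expectation_Wplus_limit j Qp :
  infinite_sum (fun m => q m * (1 - sumn (pois p m) j)) Qp ->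
  exists EWp : nat -> R,
    (forall K, is_expect q p K (Wplus j) (EWp K)) /\ Un_cv (fun K => EWp (S K) / INR (S K)) Qp.
Proof.
  intros HQp.
  apply (averaging_limit p (Wplus j)
           (fun V m => 1 - sumn (fun l => Bin (ndraws p V) (INR m / INR V) l) j)
           (fun m => 1 - sumn (pois p m) j) (1 + INR j) Qp).
  - intros V m H. eapply Rle_trans; [apply Rabs_triang|]. rewrite Rabs_Ropp, Rabs_R1.
    apply Rplus_le_compat_l, sumn_abs_bd. intros l.
    pose proof (Bin_bounds (ndraws p V) _ l (ratio_bd V m H)). rewrite Rabs_right; lra.
  - intros m. pose proof (pois_partial_sum_bounds p hp m j). pose proof (pos_INR j).
    rewrite Rabs_right; lra.
  - intros vs Hv. apply cond_exp_Wplus; auto.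
  - intros m _. apply CV_minus; [apply cv_const|].
    apply cv_sumn. intros l. apply binomial_poisson_limit; auto.
  - exact HQp.
Qed.

(** Σ_{l>=j} Q_l = Σ_m q(m) P(Poisson(p m) >= j): the remainder
    Σ_m q(m) P(Poisson(p m) >= j + L) tends to 0 by dominated convergence. *)
Lemma tail_series_Q (Q : nat -> R) j Qp :
  (forall l, infinite_sum (Qterm q p l) (Q l)) ->
  infinite_sum (fun m => q m * (1 - sumn (pois p m) j)) Qp ->
  infinite_sum (fun l => Q (j + l)%nat) Qp.
Proof.
  intros HQ HQp.
  assert (Hpartial : forall L, infinite_sum (fun m => q m * sumn (fun l => pois p m (j + l)%nat) L)
                                            (sumn (fun l => Q (j + l)%nat) L)).
  { induction L; simpl sumn.
    - apply (inf_sum_ext (fun _ => 0)); [intros; ring | apply inf_sum_zero].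
    - apply (inf_sum_ext (fun m => q m * sumn (fun l => pois p m (j + l)%nat) L
                                   + q m * pois p m (j + L)%nat)); [intros; ring|].
      apply inf_sum_plus; auto. exact (HQ (j + L)%nat). }
  assert (Hrem : forall L, infinite_sum (fun m => q m * (1 - sumn (pois p m) (j + L)))
                                        (Qp - sumn (fun l => Q (j + l)%nat) L)).
  { intros L.
    apply (inf_sum_ext (fun m => q m * (1 - sumn (pois p m) j)
                                 - q m * sumn (fun l => pois p m (j + l)%nat) L)).
    - intros m. rewrite sumn_shift. ring.
    - apply inf_sum_minus; auto. }
  assert (Hrem0 : Un_cv (fun L => Qp - sumn (fun l => Q (j + l)%nat) L) 0).
  { apply (weighted_series_cv0 (fun L m => 1 - sumn (pois p m) (j + L))); auto.
    - intros L m. pose proof (pois_partial_sum_bounds p hp m (j + L)). lra.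
    - intros m. replace 0 with (1 - 1) by ring. apply CV_minus; [apply cv_const|].
      apply (cv_shift_add (fun N => sumn (pois p m) N)), pois_partial_sum_cv; auto. }
  apply (cv_ev _ (fun L => sumn (fun l => Q (j + l)%nat) (S L)) _ 0);
    [intros; rewrite sumn_sum_f; reflexivity|].
  apply (cv_shift_add (fun L => sumn (fun l => Q (j + l)%nat) L) _ 1).
  apply (cv_ev _ (fun L => Qp - (Qp - sumn (fun l => Q (j + l)%nat) L)) _ 0); [intros; ring|].
  pose proof (CV_minus _ _ _ _ (cv_const Qp) Hrem0) as Hlim.
  rewrite Rminus_0_r in Hlim. exact Hlim.
Qed.
End Statistics.
End LawOfV.

Theorem mainTheorem4 (q : nat -> R) (p : R)
  (hq_nonneg : forall m, 0 <= q m)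
  (hq0 : q 0%nat = 0)
  (hq_sum : infinite_sum q 1)
  (hp : 0 < p < 1) :
  exists Q : nat -> R,
    (forall j, infinite_sum (Qterm q p j) (Q j)) /\
    forall j : nat,
      (exists EW : nat -> R,
          (forall K, is_expect q p K (W j) (EW K)) /\
          Un_cv (fun K => EW (S K) / INR (S K)) (Q j)) /\
      (exists Qplus : R,
          infinite_sum (fun l => Q (j + l)%nat) Qplus /\
          exists EWp : nat -> R,
            (forall K, is_expect q p K (Wplus j) (EWp K)) /\
            Un_cv (fun K => EWp (S K) / INR (S K)) Qplus).
Proof.
  (* Q_j and Σ_m q(m) P(Poisson(p m) >= j) converge by comparison with Σ q = 1. *)
  set (Q := fun j => proj1_sig (Rseries_CV_comp (Qterm q p j) q
                                  (Qterm_bounds q hq_nonneg p hp j) (exist _ 1 hq_sum))).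
  assert (HQ : forall j, infinite_sum (Qterm q p j) (Q j))
    by (intros j; exact (proj2_sig (Rseries_CV_comp _ _ _ _))).
  exists Q. split; [exact HQ|]. intros j.
  destruct (Rseries_CV_comp _ q (tail_weight_bounds q hq_nonneg p hp j) (exist _ 1 hq_sum))
    as [Qplus HQplus].
  split; [apply expectation_W_limit; auto|].
  exists Qplus. split; [apply (tail_series_Q q hq_nonneg hq0 hq_sum p hp); auto|].
  apply expectation_Wplus_limit; auto.
Qed.
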